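(* Let $\{\mathcal Z_n\}$ be a Galton–Watson process with countably many types and irreducible mean progeny matrix $M$, and assume that the dichotomy property holds. If there exist $\lambda\le1$ and a vector $\boldsymbol x=(x_1,x_2,\dots)$ with $x_i>0$ for all $i$, $\sum_i x_i<\infty$ and $\boldsymbol xM\le\lambda\boldsymbol x$ componentwise, then $\boldsymbol q=\boldsymbol 1$.
   Context: A (multitype) Galton–Watson process with type set $\mathcal S=\{1,2,3,\dots\}$ is $\{\mathcal Z_n=(Z_{n1},Z_{n2},\dots)\}_{n\in\mathbb N}$, $Z_{n\ell}$ the number of type-$\ell$ individuals in generation $n$, started from one individual of type $\varphi_0$; $|\mathcal Z_n|=\sum_\ell Z_{n\ell}$. The mean progeny matrix is $M_{ij}=\partial P_i/\partial s_j|_{\boldsymbol s=\boldsymbol 1}$ (assumed finite), $P_i$ being the progeny generating function of type $i$. Global extinction: $q_i=\mathbb P[\lim_n|\mathcal Z_n|=0\mid\varphi_0=i]$. The dichotomy property holds if for every initial type $i$, with probability 1 either $|\mathcal Z_n|=0$ eventually or $|\mathcal Z_n|\to\infty$. *)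

From HB Require Import structures.
From mathcomp Require Import all_boot all_order all_algebra.
From mathcomp Require Import all_classical all_reals all_analysis.
Set Implicit Arguments. Unset Strict Implicit. Unset Printing Implicit Defensive.
Import Order.TTheory GRing.Theory Num.Theory.
Local Open Scope classical_set_scope.
Local Open Scope ring_scope.

(* Types are indexed by nat (type 0,1,2,... instead of 1,2,3,...).
   A generation is represented by the list of the types of its individuals;
   the offspring of one individual is a finite list of the children's types. *)

Definition mutually_independent d (T : measurableType d) (R : realType)
  (P : probability T R) (I : eqType) (X : I -> T -> seq nat) : Prop :=
  forall (F : seq I) (s : I -> seq nat), uniq F ->
    P (\bigcap_(i in [set` F]) [set w | X i w = s i]) =
    (\prod_(i <- F) P [set w | X i w = s i])%E.

(* The Galton-Watson process started from one individual of type i0: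
   the individual at position k of generation n, of type t, has offspring
   xi n t k w. *)
Fixpoint gw (T : Type) (xi : nat -> nat -> nat -> T -> seq nat) (i0 : nat)
  (n : nat) (w : T) : seq nat :=
  match n with
  | 0 => [:: i0]
  | m.+1 => let z := gw xi i0 m w in
            flatten [seq xi m (nth 0%N z k) k w | k <- iota 0 (size z)]
  end.

(* Mean progeny matrix: M i j = E[number of type-j children of a type-i
   individual], with offspring law p i (a pmf on finite lists of types). *)
Definition mean_matrix (R : realType) (p : nat -> seq nat -> R) (i j : nat)
  : \bar R :=
  (\esum_(s in [set: seq nat]) ((p i s) * (count_mem j s)%:R)%:E)%E.

(* Irreducibility: for all i j, (M^n)_{ij} > 0 for some n >= 1, i.e. there
   is a nonempty path of positive entries from i to j. *)
Definition irreducible (R : realType) (M : nat -> nat -> \bar R) : Prop :=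
  forall i j : nat, exists l : seq nat,
    [/\ l != [::], path (fun a b => (0 < M a b)%E) i l & last i l = j].

Definition extinct (zsize : nat -> nat) : Prop :=
  exists N, forall n, (N <= n)%N -> zsize n = 0%N.

Definition explodes (zsize : nat -> nat) : Prop :=
  forall K, exists N, forall n, (N <= n)%N -> (K <= zsize n)%N.

From HB Require Import structures.
From mathcomp Require Import all_boot all_order all_algebra.
From mathcomp Require Import all_classical all_reals all_analysis.
Set Implicit Arguments. Unset Strict Implicit. Unset Printing Implicit Defensive.
Import Order.TTheory GRing.Theory Num.Theory.
Local Open Scope classical_set_scope.
Local Open Scope ring_scope.

(* Let m_n(j) be the expected number of type-j individuals in generation n, so
   that m_0 is the indicator of the initial type i0 and m_(n+1) = m_n M. As
   x M <= lambda x <= x, induction gives x_i0 m_n <= x, hence the expected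
   population size E|Z_n| = sum_j m_n(j) is bounded by C = (sum_j x_j) / x_i0.
   By Markov's inequality P(|Z_n| >= K) <= C / K for all n, so |Z_n| tends to
   infinity with probability at most C / K for every K, that is, never; the
   dichotomy leaves extinction as the almost sure outcome. *)

Lemma le0_of_le_divn (R : archiRealFieldType) (r c : R) :
  (forall K : nat, (0 < K)%N -> r <= c / K%:R) -> r <= 0.
Proof.
move=> le_div; rewrite leNgt; apply/negP => r_gt0.
have c_gt0 : 0 < c.
  by apply: lt_le_trans r_gt0 _; have := le_div 1%N isT; rewrite mulr1n divr1.
pose K := (Num.Def.archi_bound (c / r)).+1.
have cr_lt_K : c / r < K%:R.
  by apply: lt_trans (archi_boundP _) _; rewrite ?ltr_nat // divr_ge0 // ltW.
have := le_div K isT; apply/negP; rewrite -ltNge ltr_pdivrMr ?ltr0n //.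
by rewrite mulrC -ltr_pdivrMr.
Qed.

Section countable_measurable.
Context d (T : measurableType d) (I : countType) (D : set I) (F : I -> set T).
Hypothesis mF : forall a, D a -> measurable (F a).

Lemma countable_bigcup_measurable : measurable (\bigcup_(a in D) F a).
Proof.
rewrite bigcup_mkcond; apply: countable_bigcupT_measurable; first exact: countableP.
by move=> a; case: ifPn => // /set_mem /mF.
Qed.

Lemma countable_bigcap_measurable : measurable (\bigcap_(a in D) F a).
Proof.
rewrite -[X in measurable X]setCK setC_bigcap; apply: measurableC.
rewrite bigcup_mkcond; apply: countable_bigcupT_measurable; first exact: countableP.
by move=> a; case: ifPn => // /set_mem /mF /measurableC.
Qed.

End countable_measurable.

Section esum_lemmas.
Context {R : realType}.
Local Open Scope ereal_scope.

Lemma esumZl (I : choiceType) (D : set I) (f : I -> \bar R) (k : R) :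
  (0 <= k)%R -> (forall a, D a -> 0 <= f a) ->
  \esum_(a in D) (k%:E * f a) = k%:E * \esum_(a in D) f a.
Proof.
move=> k0 f0; rewrite /esum -ereal_supZl //; last first.
  by apply/set0P; exists 0, set0; [exact: fsets_set0|rewrite fsbig_set0].
rewrite image_comp; congr ereal_sup; apply: eq_imagel => A [finA AD] /=.
rewrite !fsbig_finite //= big_seq [in RHS]big_seq ge0_sume_distrr // => a.
by rewrite in_fset_set // inE => /AD /f0.
Qed.

Lemma fin_esumZl (I : choiceType) (D : set I) (f : I -> \bar R) (k : \bar R) :
  k \is a fin_num -> 0 <= k -> (forall a, D a -> 0 <= f a) ->
  \esum_(a in D) (k * f a) = k * \esum_(a in D) f a.
Proof. by move=> kf k0 f0; rewrite -(fineK kf) esumZl // fine_ge0. Qed.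

Lemma esum_single (I : choiceType) (D : set I) (f : I -> \bar R) (a0 : I) :
  (forall a, D a -> 0 <= f a) -> D a0 -> (forall a, D a -> a <> a0 -> f a = 0) ->
  \esum_(a in D) f a = f a0.
Proof.
move=> f0 Da0 fz; rewrite (esumID [set a0]) // [X in _ + X]esum1 ?adde0; last first.
  by move=> a [Da /= na]; apply: fz.
have -> : D `&` [set a0] = [set a0] by apply/seteqP; split=> [a [] //|a /= ->].
by rewrite esum_set1 // f0.
Qed.

Lemma esum_ord (f : nat -> \bar R) m : (forall k, 0 <= f k) ->
  \esum_(k in [set k | (k < m)%N]) f k = \sum_(k < m) f k.
Proof.
move=> f0; elim: m => [|m IH].
  by rewrite big_ord0 (_ : [set k | _] = set0) ?esum_set0 //; apply/seteqP; split.
rewrite big_ord_recr /= (esumID [set m]) //.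
have -> : [set k | (k < m.+1)%N] `&` [set m] = [set m].
  by apply/seteqP; split => [k [] //|k /= ->]; split.
have -> : [set k | (k < m.+1)%N] `&` ~` [set m] = [set k | (k < m)%N].
  apply/seteqP; split => k /=.
    by move=> [km /eqP nkm]; rewrite ltn_neqAle nkm -ltnS.
  by move=> km; split; [exact: ltnW|move=> e; rewrite e ltnn in km].
by rewrite esum_set1 // IH addeC.
Qed.

Lemma esum_count_mem (s : seq nat) (f : nat -> \bar R) : (forall t, 0 <= f t) ->
  \esum_(t in [set: nat]) ((count_mem t s)%:R)%:E * f t = \sum_(t <- s) f t.
Proof.
move=> f0; elim: s => [|a s IH].
  by rewrite big_nil esum1 // => t _; rewrite mul0e.
have ge0 (b : nat) t : 0 <= (b%:R)%:E * f t by rewrite mule_ge0 // lee_fin.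
rewrite big_cons; have -> : f a = \esum_(t in [set: nat]) ((a == t)%:R)%:E * f t.
  rewrite (esum_single (a0 := a)) ?eqxx ?mul1e // => t _ /eqP.
  by rewrite eq_sym => /negPf ->; rewrite mul0e.
rewrite -IH -esumD //.
by apply: eq_esum => t _; rewrite /= natrD EFinD ge0_muleDl // lee_fin.
Qed.

Lemma exchange_esum (I J : choiceType) (a : I -> J -> \bar R) :
  (forall i j, 0 <= a i j) ->
  \esum_(i in [set: I]) \esum_(j in [set: J]) a i j =
  \esum_(j in [set: J]) \esum_(i in [set: I]) a i j.
Proof.
move=> a0; rewrite !esum_esum //.
rewrite (reindex_esum ([set: J] `*`` (fun _ => [set: I])) _ (fun x => (x.2, x.1))) //.
split.
- by move=> [j i] _.
- by move=> [i1 i2] [j1 j2] /= _ _ [] -> ->.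
- by move=> [i j] _; exists (j, i).
Qed.

Lemma esum_curry (I J : choiceType) (D : set I) (D' : I -> set J) (f : I * J -> \bar R) :
  (forall a, (D `*`` D') a -> 0 <= f a) ->
  \esum_(a in D `*`` D') f a = \esum_(i in D) \esum_(j in D' i) f (i, j).
Proof.
by move=> f0; rewrite esum_esum => [|i j Di D'j]; [apply: eq_esum => -[]|exact: f0].
Qed.

Definition pickle_series (I : countType) (D : set I) (f : I -> \bar R) (n : nat) :=
  if pickle_inv n is Some a then (if a \in D then f a else 0) else 0.

Lemma pickle_series_ge0 (I : countType) (D : set I) (f : I -> \bar R) n :
  (forall a, D a -> 0 <= f a) -> 0 <= pickle_series D f n.
Proof.
rewrite /pickle_series => f0; case: (pickle_inv n) => // a.
by case: ifP => // /set_mem /f0.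
Qed.

Lemma esum_pickle_series (I : countType) (D : set I) (f : I -> \bar R) :
  (forall a, D a -> 0 <= f a) ->
  \esum_(a in D) f a = \sum_(n <oo) pickle_series D f n.
Proof.
move=> f0; rewrite nneseries_esumT => [|n]; last exact: pickle_series_ge0.
have -> : \esum_(n in [set: nat]) pickle_series D f n =
          \esum_(n in range (@pickle I)) pickle_series D f n.
  rewrite [RHS]esum_mkcond; apply: eq_esum => n _.
  case: ifPn => // /negP n_not_code; rewrite /pickle_series.
  case E : (pickle_inv n) => [a|//]; exfalso; apply: n_not_code; apply/mem_set.
  by exists a => //; have := @pickle_invK I n; rewrite E.
rewrite (reindex_esum [set: I] _ pickle); last first.
  split=> [a _|a b _ _ /(pcan_inj pickleK_inv)|n [a _ <-]] //; by exists a.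
rewrite esum_mkcond; apply: eq_esum => a _.
by rewrite /pickle_series pickleK_inv.
Qed.

Section integral_of_indicators.
Context d (T : measurableType d) (P : {measure set T -> \bar R}).

Lemma integral_esum_indic (I : countType) (D : set I) (g : I -> R) (H : I -> set T) :
  (forall a, D a -> 0 <= g a)%R -> (forall a, D a -> measurable (H a)) ->
  \int[P]_w (\esum_(a in D) ((g a)%:E * (\1_(H a) w)%:E)) =
  \esum_(a in D) ((g a)%:E * P (H a)).
Proof.
move=> g0 mH; have ge0 w a : D a -> 0 <= (g a)%:E * (\1_(H a) w)%:E.
  by move=> Da; rewrite mule_ge0 // lee_fin // g0.
under eq_integral => w _ do rewrite (esum_pickle_series (ge0 w)).
rewrite integral_nneseries //; first last.
- by move=> n w _; apply: pickle_series_ge0; exact: ge0.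
- move=> n; rewrite /pickle_series.
  case: (pickle_inv n) => [a|]; last exact: measurable_cst.
  case: (boolP (a \in D)) => [/set_mem Da|_]; last exact: measurable_cst.
  apply/measurable_realfun.measurable_EFinP/measurable_realfun.measurable_funM.
    exact: measurable_cst.
  exact: measurable_realfun.measurable_indic (mH _ Da).
rewrite esum_pickle_series => [|a Da]; last by rewrite mule_ge0 ?lee_fin ?g0.
apply: eq_eseriesr => n _; rewrite /pickle_series.
case: (pickle_inv n) => [a|]; last by rewrite integral0.
case: (boolP (a \in D)) => [/set_mem Da|_]; last by rewrite integral0.
rewrite ge0_integralZl_EFin ?g0 //; last first.
  exact/measurable_realfun.measurable_EFinP/measurable_realfun.measurable_indic/mH.
by rewrite integral_indic ?setIT //; exact: mH.
Qed.

Lemma esum_measure_indic_eq (I J : countType) (D : set I) (g : I -> R) (H : I -> set T)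
    (D' : set J) (g' : J -> R) (H' : J -> set T) :
  (forall a, D a -> 0 <= g a)%R -> (forall a, D a -> measurable (H a)) ->
  (forall b, D' b -> 0 <= g' b)%R -> (forall b, D' b -> measurable (H' b)) ->
  (forall w, \esum_(a in D) ((g a)%:E * (\1_(H a) w)%:E) =
             \esum_(b in D') ((g' b)%:E * (\1_(H' b) w)%:E)) ->
  \esum_(a in D) ((g a)%:E * P (H a)) = \esum_(b in D') ((g' b)%:E * P (H' b)).
Proof.
move=> g0 mH g'0 mH' e; rewrite -!integral_esum_indic //.
by apply: eq_integral => w _; exact: e.
Qed.

Lemma measure_esum_indic (I : countType) (D : set I) (H : I -> set T) (A : set T) :
  measurable A -> (forall a, D a -> measurable (H a)) ->
  (forall w, (\1_A w : R)%:E = \esum_(a in D) (\1_(H a) w)%:E) ->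
  P A = \esum_(a in D) P (H a).
Proof.
move=> mA mH e; transitivity (\esum_(a in D) ((1%R : R)%:E * P (H a))); last first.
  by apply: eq_esum => a _; rewrite mul1e.
rewrite -integral_esum_indic // -[A]setIT -integral_indic //.
by apply: eq_integral => w _; rewrite e; apply: eq_esum => a _; rewrite mul1e.
Qed.

End integral_of_indicators.
End esum_lemmas.

Section galton_watson.
Context d (T : measurableType d) (R : realType) (P : probability T R)
  (p : nat -> seq nat -> R) (xi : nat -> nat -> nat -> T -> seq nat)
  (i0 : nat).
Hypothesis xi_meas : forall n i k s, measurable [set w | xi n i k w = s].
Local Open Scope ereal_scope.

Let Z n w := gw xi i0 n w.
Let E n z := [set w | Z n w = z].

Lemma generation_event0 z : E 0 z = if z == [:: i0] then setT else set0.
Proof.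
apply/seteqP; split => w; rewrite /E /Z /=; case: eqP => [->|nz] //.
by move=> /esym /nz.
Qed.

Definition offspring_lists n w : seq (seq nat) :=
  [seq xi n (nth 0%N (Z n w) k) k w | k <- iota 0 (size (Z n w))].

Definition offspring_event n (z : seq nat) (ls : seq (seq nat)) : set T :=
  [set w | forall k, (k < size z)%N -> xi n (nth 0%N z k) k w = nth [::] ls k].

Definition offspring_splits (z' : seq nat) : set (seq nat * seq (seq nat)) :=
  [set a | size a.2 = size a.1 /\ flatten a.2 = z'].

Lemma offspring_event_lists n w : offspring_event n (Z n w) (offspring_lists n w) w.
Proof. by move=> k kz; rewrite (nth_map 0%N) ?size_iota // nth_iota. Qed.

Lemma offspring_splitE n w z' a : offspring_splits z' a ->
  Z n w = a.1 -> offspring_event n a.1 a.2 w -> a = (Z n w, offspring_lists n w).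
Proof.
case: a => z ls [/= sz _] /= zE; rewrite -zE in sz * => G.
suff -> : ls = offspring_lists n w by [].
apply: (@eq_from_nth _ [::]) => [|k]; first by rewrite size_map size_iota sz.
by rewrite sz => kz; rewrite (nth_map 0%N) ?size_iota // nth_iota // add0n G.
Qed.

Lemma gw_succP n w z' : Z n.+1 w = z' <->
  exists2 a, offspring_splits z' a & Z n w = a.1 /\ offspring_event n a.1 a.2 w.
Proof.
split=> [<-|[a Da [zE G]]].
  exists (Z n w, offspring_lists n w); last by split => //; exact: offspring_event_lists.
  by split => //=; rewrite size_map size_iota.
by case: (Da) => _ <-; rewrite (offspring_splitE Da zE G).
Qed.

Lemma measurable_offspring_event n z ls : measurable (offspring_event n z ls).
Proof.
have -> : offspring_event n z ls = \bigcap_(k in [set k | (k < size z)%N])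
    [set w | xi n (nth 0%N z k) k w = nth [::] ls k].
  by apply/seteqP; split => w /= H k /H.
by apply: bigcap_measurableType => k _; exact: xi_meas.
Qed.

Lemma measurable_generation_event n z : measurable (E n z).
Proof.
elim: n z => [|n IH] z; first by rewrite generation_event0; case: ifP.
have -> : E n.+1 z =
    \bigcup_(a in offspring_splits z) (E n a.1 `&` offspring_event n a.1 a.2).
  by apply/seteqP; split => w /gw_succP.
apply: countable_bigcup_measurable => a _.
by apply: measurableI; [exact: IH|exact: measurable_offspring_event].
Qed.

Lemma prob_generation_succ n z' (G : set T) : measurable G ->
  P (E n.+1 z' `&` G) =
  \esum_(a in offspring_splits z') P (E n a.1 `&` offspring_event n a.1 a.2 `&` G).
Proof.
move=> mG; apply: measure_esum_indic.
- by apply: measurableI => //; exact: measurable_generation_event.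
- move=> a _; apply: measurableI => //.
  apply: measurableI; first exact: measurable_generation_event.
  exact: measurable_offspring_event.
move=> w; have [[/gw_succP [a0 Da0 [zE G0]] Gw]|hw] := pselect ((E n.+1 z' `&` G) w).
  rewrite indicE mem_set; last by split => //; apply/gw_succP; exists a0.
  rewrite (esum_single (a0 := a0)) ?indicE ?mem_set //.
  move=> a Da na; rewrite indicE memNset // => -[[za Ga] _]; apply: na.
  by rewrite (offspring_splitE Da za Ga) (offspring_splitE Da0 zE G0).
rewrite indicE memNset // esum1 // => a Da.
rewrite indicE memNset // => -[[za Ga] Gw]; apply: hw; split => //.
by apply/gw_succP; exists a.
Qed.

Hypothesis xi_indep :
  mutually_independent P (fun nik : nat * nat * nat => xi nik.1.1 nik.1.2 nik.2).

Definition offspring_family_event (F : seq (nat * nat * nat))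
    (s : nat * nat * nat -> seq nat) :=
  \bigcap_(f in [set` F]) [set w | xi f.1.1 f.1.2 f.2 w = s f].

Definition offspring_indices n (z : seq nat) : seq (nat * nat * nat) :=
  [seq (n, nth 0%N z k, k) | k <- iota 0 (size z)].

Definition assign_generation n (ls : seq (seq nat)) (s : nat * nat * nat -> seq nat) f :=
  if f.1.1 == n then nth [::] ls f.2 else s f.

Lemma measurable_offspring_family_event F s : measurable (offspring_family_event F s).
Proof. by apply: countable_bigcap_measurable => f _; exact: xi_meas. Qed.

Lemma offspring_family_event_nil s : offspring_family_event [::] s = setT.
Proof. by apply/seteqP; split => // w _ f. Qed.

Lemma uniq_offspring_indices n z : uniq (offspring_indices n z).
Proof. by rewrite map_inj_in_uniq ?iota_uniq // => k1 k2 _ _ []. Qed.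

Lemma offspring_event_familyE n z ls F s : (forall f, f \in F -> (n < f.1.1)%N) ->
  offspring_event n z ls `&` offspring_family_event F s =
  offspring_family_event (offspring_indices n z ++ F) (assign_generation n ls s).
Proof.
move=> F_later; apply/seteqP; split => w.
  move=> [G HF] f /=; rewrite mem_cat => /orP[/mapP[k]|fF].
    by rewrite mem_iota add0n => /andP[_ kz] -> /=; rewrite /assign_generation eqxx G.
  have := F_later _ fF; rewrite /assign_generation; case: eqP => [->|_ _].
    by rewrite ltnn.
  exact: HF.
move=> H; split.
  move=> k kz; have := H (n, nth 0%N z k, k).
  rewrite /assign_generation /= eqxx /=; apply; rewrite mem_cat; apply/orP; left.
  by apply: map_f; rewrite mem_iota add0n.
move=> f fF; have := H f; rewrite /assign_generation /=.
have := F_later _ fF; case: eqP => [->|_ _]; first by rewrite ltnn.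
by apply; rewrite mem_cat fF orbT.
Qed.

(* Generation [n] is a function of the offspring variables of generations
   [< n], hence independent of those of generations [>= n]. *)
Lemma generation_indep n z F s :
  uniq F -> (forall f, f \in F -> (n <= f.1.1)%N) ->
  P (E n z `&` offspring_family_event F s) = P (E n z) * P (offspring_family_event F s).
Proof.
elim: n z F s => [|n IH] z F s uF F_later.
  rewrite generation_event0; case: ifP => _.
    by rewrite setTI probability_setT mul1e.
  by rewrite set0I measure0 mul0e.
have F_after f : f \in F -> (n < f.1.1)%N by move/F_later.
have uFz z0 : uniq (offspring_indices n z0 ++ F).
  rewrite cat_uniq uniq_offspring_indices uF andbT /=; apply/hasPn => f fF.
  by apply/negP => /mapP[k _ fE]; have := F_after _ fF; rewrite fE /= ltnn.
have idx_from z0 f : f \in offspring_indices n z0 -> (n <= f.1.1)%N.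
  by case/mapP => k _ ->.
have idxF_from z0 f : f \in offspring_indices n z0 ++ F -> (n <= f.1.1)%N.
  by rewrite mem_cat => /orP[/idx_from|/F_after /ltnW].
have split_term (a : seq nat * seq (seq nat)) :
    P (E n a.1 `&` offspring_event n a.1 a.2 `&` offspring_family_event F s) =
    P (E n a.1 `&` offspring_event n a.1 a.2 `&` setT) * P (offspring_family_event F s).
  rewrite setIT -setIA offspring_event_familyE // (IH _ _ _ (uFz _) (idxF_from _)).
  rewrite -(setIT (offspring_event _ _ _)) -(offspring_family_event_nil s).
  rewrite offspring_event_familyE // cats0.
  rewrite (IH _ _ _ (uniq_offspring_indices _ _) (idx_from _)).
  rewrite -muleA; congr (_ * _); rewrite !xi_indep ?uniq_offspring_indices //.
  rewrite big_cat /=; congr (_ * _); apply: eq_big_seq => f /F_after.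
  by rewrite /assign_generation; case: eqP => // ->; rewrite ltnn.
rewrite prob_generation_succ; last exact: measurable_offspring_family_event.
under eq_esum do rewrite split_term.
rewrite -[X in _ = P X * _]setIT prob_generation_succ //.
have fin : P (offspring_family_event F s) \is a fin_num.
  by rewrite fin_num_measure //; exact: measurable_offspring_family_event.
under eq_esum do rewrite muleC.
by rewrite fin_esumZl // 1?muleC // => a _.
Qed.

Hypothesis xi_law : forall n i k s, P [set w | xi n i k w = s] = (p i s)%:E.

Lemma offspring_law_ge0 t s : (0 <= p t s)%R.
Proof. by rewrite -lee_fin -(xi_law 0 t 0 s) measure_ge0. Qed.

Lemma mean_matrix_ge0 t j : 0 <= mean_matrix p t j.
Proof. by apply: esum_ge0 => s _; rewrite lee_fin mulr_ge0 ?offspring_law_ge0. Qed.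

Definition mean_count n j :=
  \esum_(z in [set: seq nat]) ((count_mem j z)%:R)%:E * P (E n z).

Lemma mean_count_ge0 n j : 0 <= mean_count n j.
Proof. by apply: esum_ge0 => z _; rewrite mule_ge0. Qed.

Lemma mean_count0 j : mean_count 0 j = ((i0 == j)%:R)%:E.
Proof.
rewrite /mean_count (esum_single (a0 := [:: i0])) //.
- by rewrite generation_event0 eqxx probability_setT mule1 /= addn0.
- by move=> z _; rewrite mule_ge0.
by move=> z _ /eqP nz; rewrite generation_event0 (negPf nz) measure0 mule0.
Qed.

(* [(z, (k, s))] stands for: generation [n] is [z] and its [k]-th member has
   offspring [s]. *)
Definition families := [set a : seq nat * (nat * seq nat) | (a.2.1 < size a.1)%N].

Definition family_event n (a : seq nat * (nat * seq nat)) :=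
  E n a.1 `&` [set w | xi n (nth 0%N a.1 a.2.1) a.2.1 w = a.2.2].

Lemma count_generation_indic n j w : ((count_mem j (Z n w))%:R)%:E =
  \esum_(z in [set: seq nat]) ((count_mem j z)%:R)%:E * (\1_(E n z) w : R)%:E.
Proof.
rewrite (esum_single (a0 := Z n w)) //.
  by rewrite indicE mem_set // mule1.
by move=> z _ nz; rewrite indicE memNset ?mule0 // => e; apply: nz; rewrite -e.
Qed.

Lemma familiesE : families =
  [set: seq nat] `*`` (fun z => [set k | (k < size z)%N] `*`` (fun=> [set: seq nat])).
Proof. by apply/seteqP; split => -[z [k s]] //= [_ []]. Qed.

Lemma count_succ_generation_indic n j w : ((count_mem j (Z n.+1 w))%:R)%:E =
  \esum_(a in families) ((count_mem j a.2.2)%:R)%:E * (\1_(family_event n a) w : R)%:E.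
Proof.
rewrite familiesE esum_curry //.
rewrite (esum_single (a0 := Z n w)) //=; first last.
- move=> z _ nz; apply: esum1 => b _; rewrite indicE memNset ?mule0 // => -[/= e _].
  by apply: nz; rewrite e.
- by move=> z _; apply: esum_ge0 => b _; rewrite mule_ge0.
rewrite esum_curry //.
transitivity (\esum_(k in [set k | (k < size (Z n w))%N])
                ((count_mem j (xi n (nth 0%N (Z n w) k) k w))%:R : R)%:E).
  rewrite esum_ord // /Z /= -/(Z n w) count_flatten sumnE big_map natr_sum sumEFin.
  by rewrite -{1}(subn0 (size _)) -/(index_iota _ _) big_map big_mkord.
apply: eq_esum => k _; rewrite (esum_single (a0 := xi n (nth 0%N (Z n w) k) k w)) //.
  by rewrite indicE mem_set ?mule1.
by move=> s _ ns; rewrite indicE memNset ?mule0 // => -[_ /= e]; apply: ns; rewrite e.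
Qed.

Lemma prob_family_event n a :
  P (family_event n a) = P (E n a.1) * (p (nth 0%N a.1 a.2.1) a.2.2)%:E.
Proof.
pose f := (n, nth 0%N a.1 a.2.1, a.2.1).
have -> : family_event n a = E n a.1 `&` offspring_family_event [:: f] (fun _ => a.2.2).
  congr (_ `&` _); apply/seteqP; split => w /=.
    by move=> e g; rewrite /= inE => /eqP ->.
  by move=> H; apply: (H f); rewrite /= inE.
rewrite generation_indep // => [|g]; last by rewrite inE => /eqP ->.
by rewrite xi_indep // big_seq1 xi_law.
Qed.

Lemma mean_count_succ_generation n j : mean_count n.+1 j =
  \esum_(z in [set: seq nat]) P (E n z) * \sum_(t <- z) mean_matrix p t j.
Proof.
have -> : mean_count n.+1 j = \esum_(a in families)
    ((count_mem j a.2.2)%:R)%:E * (P (E n a.1) * (p (nth 0%N a.1 a.2.1) a.2.2)%:E).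
  under [RHS]eq_esum do rewrite -prob_family_event.
  apply: esum_measure_indic_eq => //.
  - by move=> z _; exact: measurable_generation_event.
  - move=> a _; apply: measurableI; first exact: measurable_generation_event.
    exact: xi_meas.
  by move=> w; rewrite -count_generation_indic -count_succ_generation_indic.
rewrite familiesE esum_curry; last first.
  by move=> a _; rewrite !mule_ge0 // lee_fin offspring_law_ge0.
apply: eq_esum => z _.
have fin : P (E n z) \is a fin_num.
  by rewrite fin_num_measure //; exact: measurable_generation_event.
under eq_esum do rewrite /= muleCA -EFinM.
rewrite fin_esumZl //; last by move=> b _; rewrite lee_fin mulr_ge0 ?offspring_law_ge0.
congr (_ * _); rewrite esum_curry; last first.
  by move=> *; rewrite lee_fin mulr_ge0 ?offspring_law_ge0.
transitivity (\esum_(k in [set k | (k < size z)%N]) mean_matrix p (nth 0%N z k) j).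
  by apply: eq_esum => k _; apply: eq_esum => s _; rewrite mulrC.
by rewrite esum_ord => [|k]; [rewrite (big_nth 0%N) big_mkord|exact: mean_matrix_ge0].
Qed.

Lemma esum_generation_sum n (f : nat -> \bar R) :
  (forall t, 0 <= f t) -> (forall t, f t \is a fin_num) ->
  \esum_(z in [set: seq nat]) P (E n z) * \sum_(t <- z) f t =
  \esum_(t in [set: nat]) f t * mean_count n t.
Proof.
move=> f0 f_fin.
have fin z : P (E n z) \is a fin_num.
  by rewrite fin_num_measure //; exact: measurable_generation_event.
have expand z : P (E n z) * \sum_(t <- z) f t =
    \esum_(t in [set: nat]) P (E n z) * (((count_mem t z)%:R)%:E * f t).
  by rewrite -esum_count_mem // fin_esumZl // => t _; rewrite mule_ge0.
under eq_esum do rewrite expand.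
rewrite exchange_esum; last by move=> z t; rewrite !mule_ge0.
apply: eq_esum => t _; rewrite /mean_count -fin_esumZl ?f_fin // => [|z _].
  by apply: eq_esum => z _; rewrite muleA muleC (muleC (P _)).
exact: mule_ge0.
Qed.

Hypothesis M_finite : forall i j, mean_matrix p i j < +oo.

Lemma mean_count_succ n j :
  mean_count n.+1 j = \esum_(t in [set: nat]) mean_matrix p t j * mean_count n t.
Proof.
rewrite mean_count_succ_generation esum_generation_sum // => t.
  exact: mean_matrix_ge0.
by rewrite ge0_fin_numE ?M_finite ?mean_matrix_ge0.
Qed.

Variables (lambda : R) (x : nat -> R).
Hypotheses (lambda_le1 : (lambda <= 1)%R) (x_pos : forall i, (0 < x i)%R)
  (x_sum : \esum_(i in [set: nat]) (x i)%:E < +oo)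
  (xM_le : forall j, \esum_(i in [set: nat]) ((x i)%:E * mean_matrix p i j)
                      <= (lambda * x j)%:E).

Let x_ge0 i : (0 <= x i)%R := ltW (x_pos i).

Lemma mean_count_le n j : (x i0)%:E * mean_count n j <= (x j)%:E.
Proof.
elim: n j => [|n IH] j.
  rewrite mean_count0 -EFinM lee_fin; case: eqP => [->|_].
    by rewrite mulr1.
  by rewrite mulr0 ltW.
rewrite mean_count_succ -esumZl ?x_ge0 //; last first.
  by move=> t _; rewrite mule_ge0 ?mean_count_ge0 ?mean_matrix_ge0.
apply: (@le_trans _ _ (\esum_(t in [set: nat]) (x t)%:E * mean_matrix p t j)).
  apply: le_esum => t _; rewrite muleCA muleC.
  by apply: lee_wpmul2r; [exact: mean_matrix_ge0|exact: IH].
by apply: le_trans (xM_le j) _; rewrite lee_fin ler_piMl.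
Qed.

Definition mean_size_bound := ((x i0)^-1 * fine (\esum_(t in [set: nat]) (x t)%:E))%R.

Lemma mean_size_le n :
  \esum_(z in [set: seq nat]) ((size z)%:R)%:E * P (E n z) <= mean_size_bound%:E.
Proof.
have -> : \esum_(z in [set: seq nat]) ((size z)%:R)%:E * P (E n z) =
          \esum_(t in [set: nat]) 1%:E * mean_count n t.
  rewrite -esum_generation_sum //; apply: eq_esum => z _.
  by rewrite -sum1_size natr_sum sumEFin muleC.
have sum_fin : \esum_(t in [set: nat]) (x t)%:E \is a fin_num.
  by rewrite ge0_fin_numE // esum_ge0 // => t _; rewrite lee_fin.
rewrite /mean_size_bound EFinM fineK // -esumZl ?invr_ge0 ?x_ge0 //; last first.
  by move=> t _; rewrite lee_fin.
have one_mul t : 1%:E * mean_count n t = mean_count n t := mul1e _.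
apply: le_esum => t _; rewrite one_mul -(@lee_pmul2l _ (x i0)%:E) ?lte_fin //.
by rewrite -!EFinM mulrA mulfV ?gt_eqF // mul1r mean_count_le.
Qed.

Lemma measurable_size_ge n K : measurable [set w | (K <= size (Z n w))%N].
Proof.
rewrite (_ : [set w | _] = \bigcup_(z in [set z | (K <= size z)%N]) E n z).
  by apply: countable_bigcup_measurable => z _; exact: measurable_generation_event.
by apply/seteqP; split => w /=; [exists (Z n w)|move=> [z /= Kz ->]].
Qed.

Lemma prob_size_ge_le n K :
  (K%:R)%:E * P [set w | (K <= size (Z n w))%N] <= mean_size_bound%:E.
Proof.
rewrite (measure_esum_indic P (D := [set z | (K <= size z)%N]) (H := E n)); first last.
- move=> w; have [Kw|Kw] := pselect (K <= size (Z n w))%N.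
    rewrite (esum_single (a0 := Z n w)) // ?indicE ?mem_set //.
    by move=> z _ nz; rewrite indicE memNset // => e; apply: nz; rewrite -e.
  rewrite indicE memNset // esum1 // => z Kz; rewrite indicE memNset // => e.
  by apply: Kw; rewrite e.
- by move=> z _; exact: measurable_generation_event.
- exact: measurable_size_ge.
rewrite -esumZl //; apply: le_trans (mean_size_le n).
rewrite [leRHS]esum_mkcond [leLHS]esum_mkcond; apply: le_esum => z _.
rewrite in_setT; case: ifPn => [/set_mem /= Kz|_]; last by rewrite mule_ge0.
by apply: lee_wpmul2r => //; rewrite lee_fin ler_nat.
Qed.

Let extinct_event := [set w | extinct (fun n => size (Z n w))].
Let explodes_event := [set w | explodes (fun n => size (Z n w))].
Let size_ge_from K N :=
  \bigcap_(n in [set n | (N <= n)%N]) [set w | (K <= size (Z n w))%N].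

Lemma measurable_size_ge_from K N : measurable (size_ge_from K N).
Proof. by apply: bigcap_measurableType => n _; exact: measurable_size_ge. Qed.

Lemma measurable_extinct_event : measurable extinct_event.
Proof.
rewrite (_ : extinct_event =
    \bigcup_(N in [set: nat]) \bigcap_(n in [set n | (N <= n)%N]) E n [::]).
  apply: countable_bigcup_measurable => N _; apply: bigcap_measurableType => n _.
  exact: measurable_generation_event.
apply/seteqP; split => w [N]; last by move=> _ h; exists N => n /h ->.
by move=> h; exists N => // n /h /size0nil.
Qed.

Lemma explodes_event_sub K : explodes_event `<=` \bigcup_N size_ge_from K N.
Proof. by move=> w /(_ K) [N hN]; exists N => // n /hN. Qed.

Lemma measurable_explodes_event : measurable explodes_event.
Proof.
rewrite (_ : explodes_event = \bigcap_(K in [set: nat]) \bigcup_N size_ge_from K N).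
  apply: countable_bigcap_measurable => K _.
  exact: bigcupT_measurable (measurable_size_ge_from K).
apply/seteqP; split => w; first by move=> h K _; exact: explodes_event_sub.
by move=> h K; have [N _ hN] := h K I; exists N => n /hN.
Qed.

Lemma prob_explodes_le K : (0 < K)%N ->
  P explodes_event <= (mean_size_bound / K%:R)%:E.
Proof.
move=> K_gt0; have mF := measurable_size_ge_from K.
have F_nondecr : {homo size_ge_from K : N M / (N <= M)%N >-> (N <= M)%O}.
  by move=> N M NM; apply/subsetPset => w h n /= Mn; apply: h; exact: leq_trans Mn.
have F_cvg := nondecreasing_cvg_mu (mu := P) mF
  (bigcupT_measurable _ mF) F_nondecr.
apply: le_trans (le_measure P _ _ (explodes_event_sub K)) _; rewrite ?inE.
- exact: measurable_explodes_event.
- exact: bigcupT_measurable.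
rewrite -[leLHS](cvg_lim _ F_cvg); last exact: ereal_hausdorff.
apply: lime_le; first by apply/cvg_ex; eexists; exact: F_cvg.
apply: nearW => N /=; rewrite -(@lee_pmul2l _ (K%:R)%:E) ?lte_fin ?ltr0n //.
rewrite -EFinM mulrCA mulfV ?gt_eqF ?ltr0n // mulr1.
apply: le_trans (prob_size_ge_le N K); apply: lee_wpmul2l; first by rewrite lee_fin.
apply: le_measure; rewrite ?inE; [exact: mF|exact: measurable_size_ge|].
by move=> w /(_ N (leqnn N)).
Qed.

Lemma prob_explodes0 : P explodes_event = 0.
Proof.
have fin : P explodes_event \is a fin_num.
  by rewrite fin_num_measure //; exact: measurable_explodes_event.
apply/eqP; rewrite eq_le measure_ge0 andbT -(fineK fin) lee_fin.
apply: (le0_of_le_divn (c := mean_size_bound)) => K /prob_explodes_le.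
by rewrite -lee_fin fineK.
Qed.

Hypothesis dichotomy :
  P [set w | extinct (fun n => size (Z n w)) \/ explodes (fun n => size (Z n w))] = 1.

Lemma prob_extinct1 : P extinct_event = 1.
Proof.
apply/le_anti/andP; split; first exact: probability_le1 measurable_extinct_event.
rewrite -[leLHS]dichotomy; apply: le_trans (measureU2 _ measurable_extinct_event
  measurable_explodes_event) _.
by rewrite [X in _ + X](_ : _ = 0) ?adde0 //; exact: prob_explodes0.
Qed.

End galton_watson.

Theorem mainTheorem8 (d : measure_display) (T : measurableType d)
  (R : realType) (P : probability T R)
  (p : nat -> seq nat -> R)
  (xi : nat -> nat -> nat -> T -> seq nat)
  (xi_meas : forall n i k s, measurable [set w | xi n i k w = s])
  (xi_law : forall n i k s, P [set w | xi n i k w = s] = (p i s)%:E)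
  (xi_indep : mutually_independent P
                (fun nik : nat * nat * nat => xi nik.1.1 nik.1.2 nik.2))
  (M_finite : forall i j, (mean_matrix p i j < +oo)%E)
  (M_irr : irreducible (mean_matrix p))
  (dichotomy : forall i, P [set w | extinct (fun n => size (gw xi i n w))
                                  \/ explodes (fun n => size (gw xi i n w))] = 1%E)
  (lambda : R) (x : nat -> R)
  (lambda_le1 : lambda <= 1)
  (x_pos : forall i, 0 < x i)
  (x_sum : (\esum_(i in [set: nat]) (x i)%:E < +oo)%E)
  (xM_le : forall j, (\esum_(i in [set: nat]) ((x i)%:E * mean_matrix p i j)
                      <= (lambda * x j)%:E)%E) :
  forall i, P [set w | extinct (fun n => size (gw xi i n w))] = 1%E.
Proof.
move=> i; exact: (prob_extinct1 (i0 := i) xi_meas xi_indep xi_law M_finite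
  lambda_le1 x_pos x_sum xM_le (dichotomy i)).
Qed.
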